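(* Let $ABCD$ be a (nondegenerate) rectangle and let $E,F,P,Q$ be points in the same plane. Assume that $h_{BC}(EF)>|AB|$ and $h_{AB}(PQ)>|BC|$. Then $$\mu(ABCDEFPQ)\geq \tfrac{1}{2}\bigl(h_{BC}(EF)-|AB|\bigr)|BC|+\tfrac{1}{2}\bigl(h_{AB}(PQ)-|BC|\bigr)|AB|+|AB||BC|.$$
   Context: For points $K_1,\dots,K_n$ in the plane, $\mu(K_1K_2\cdots K_n)$ denotes the area of the convex hull of $\{K_1,\dots,K_n\}$. For points $A,B$ and distinct points $D,C$, the height $h_{DC}(AB)$ is the distance between the two lines parallel to $DC$ passing through $A$ and through $B$ (i.e. the length of the perpendicular from one of $A,B$ to the parallel of $DC$ through the other). $|XY|$ denotes the length of segment $XY$. *)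

(* Points of the plane are pairs (x, y) : R * R
   for an arbitrary R : realType; area = 2-dimensional Lebesgue measure
   (product of Lebesgue measures on R). *)
From mathcomp Require Import all_boot all_order all_algebra.
From mathcomp Require Import all_classical all_reals all_analysis.
Set Implicit Arguments. Unset Strict Implicit. Unset Printing Implicit Defensive.
Import Order.TTheory GRing.Theory Num.Theory.
Local Open Scope classical_set_scope.
Local Open Scope ring_scope.

Definition pt (R : realType) := (R * R)%type.

Definition convex_hull (R : realType) (n : nat) (K : 'I_n -> pt R) : set (pt R) :=
  [set p | exists w : 'I_n -> R,
     (forall i, 0 <= w i) /\ \sum_(i < n) w i = 1 /\
     p = (\sum_(i < n) w i * (K i).1, \sum_(i < n) w i * (K i).2)].

Definition mu (R : realType) (n : nat) (K : 'I_n -> pt R) : \bar R :=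
  ((@lebesgue_measure R \x @lebesgue_measure R) (convex_hull K))%E.

Definition dist (R : realType) (X Y : pt R) : R :=
  Num.sqrt ((X.1 - Y.1) ^+ 2 + (X.2 - Y.2) ^+ 2).

(* h_{DC}(AB): distance between the lines parallel to DC through A and through B,
   i.e. the length of the component of B - A orthogonal to C - D. *)
Definition height (R : realType) (D C A B : pt R) : R :=
  `| (C.1 - D.1) * (B.2 - A.2) - (C.2 - D.2) * (B.1 - A.1) | / dist D C.

Definition rectangle (R : realType) (A B C D : pt R) : Prop :=
  A <> B /\ B <> C /\
  (B.1 - A.1) * (C.1 - B.1) + (B.2 - A.2) * (C.2 - B.2) = 0 /\
  D = (A.1 + (C.1 - B.1), A.2 + (C.2 - B.2)).

Definition pts8 (R : realType) (A B C D E F P Q : pt R) : 'I_8 -> pt R :=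
  fun i => nth A [:: A; B; C; D; E; F; P; Q] i.

From mathcomp Require Import all_boot all_order all_algebra.
From mathcomp Require Import all_classical all_reals all_analysis.
From mathcomp Require Import ring lra measurable_realfun.
Set Implicit Arguments. Unset Strict Implicit. Unset Printing Implicit Defensive.
Import Order.TTheory GRing.Theory Num.Theory.
Import numFieldNormedType.Exports.
Local Open Scope classical_set_scope.
Local Open Scope ring_scope.

(* Let W and E be points of the family with least and greatest coordinate
   along AB, and S and N those with least and greatest coordinate along BC.
   The convex hull contains the rectangle ABCD and the four caps WAD, EBC, NDC
   and SAB, and these have pairwise disjoint interiors, any two of them being
   separated by a line.  The rectangle and the caps WAD, EBC together span the
   whole width of the family across BC, which is at least h_BC(EF), so
   |AB||BC|/2 + area(WAD) + area(EBC) >= h_BC(EF)|BC|/2; likewise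
   |AB||BC|/2 + area(NDC) + area(SAB) >= h_AB(PQ)|AB|/2, and the two add up to
   the claim.  The area of a triangle is bounded below by cutting it with the
   vertical line through its middle vertex into two triangles with a vertical
   side, whose measure is the integral of the lengths of their vertical
   sections. *)

Section PlaneMeasure.
Variable R : realType.
Local Notation plane := (pt R).
Local Notation lambda := (@lebesgue_measure R).
Local Notation lambda2 := (lambda \x lambda)%E.

Definition affine (al be ga : R) (X : plane) : R := al * X.1 + be * X.2 + ga.

Lemma measurable_open_halfplane (al be ga : R) :
  measurable [set X : plane | 0 < affine al be ga X].
Proof.
have mf : measurable_fun setT (affine al be ga).
  apply: measurable_funD; last exact: measurable_cst.
  by apply: measurable_funD; apply: measurable_funM;
    [exact: measurable_cst|exact: measurable_fst|exact: measurable_cst|exact: measurable_snd].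
rewrite -[X in measurable X]setTI.
by have := mf measurableT `]0, +oo[%classic (measurable_itv _);
  congr measurable; apply/seteqP; split => X /=; rewrite in_itv /= andbT.
Qed.

Definition trapezoid (a b l0 ls u0 us : R) : set plane :=
  [set X | a < X.1 < b /\ l0 + ls * (X.1 - a) < X.2 < u0 + us * (X.1 - a)].

Lemma xsection_trapezoid a b l0 ls u0 us x :
  xsection (trapezoid a b l0 ls u0 us) x =
  if a < x < b then `](l0 + ls * (x - a)), (u0 + us * (x - a))[%classic else set0.
Proof.
apply/seteqP; split => y; rewrite /xsection /= inE.
  by move=> [abx /andP[lo up]]; rewrite abx /= in_itv /= lo up.
by case: ifP => // abx /=; rewrite in_itv /=.
Qed.

Lemma lebesgue_xsection_trapezoid a b l0 ls u0 us x :
  l0 <= u0 -> l0 + ls * (b - a) <= u0 + us * (b - a) ->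
  lambda (xsection (trapezoid a b l0 ls u0 us) x) =
  ((fun y => (u0 + us * (y - a) - (l0 + ls * (y - a)))%:E) \_ `]a, b[%classic) x.
Proof.
move=> le0 leb; rewrite xsection_trapezoid patchE.
case: ifPn => [/andP[ax xb]|xab]; last first.
  by rewrite memNset ?measure0 //= in_itv; exact/negP.
rewrite mem_set; last by rewrite /= in_itv /= ax xb.
rewrite lebesgue_measure_itv /= lte_fin -EFinD.
(* the section length is affine in x and nonnegative at both ends *)
have : (b - a) * (u0 + us * (x - a) - (l0 + ls * (x - a))) =
    (u0 - l0) * (b - x) + (u0 + us * (b - a) - (l0 + ls * (b - a))) * (x - a) by ring.
have : 0 <= (u0 - l0) * (b - x) + (u0 + us * (b - a) - (l0 + ls * (b - a))) * (x - a).
  by apply: addr_ge0; apply: mulr_ge0; lra.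
move=> ge0 eq; case: ltP => // lt_ul.
apply/eqP; rewrite eq_sym eqe; apply/eqP; nra.
Qed.

Lemma trapezoid_measure a b l0 ls u0 us : a <= b -> l0 <= u0 ->
  l0 + ls * (b - a) <= u0 + us * (b - a) ->
  lambda2 (trapezoid a b l0 ls u0 us) =
  ((b - a) * (u0 - l0) + (us - ls) * (b - a) ^+ 2 / 2)%:E.
Proof.
move=> ab le0 leb; rewrite /product_measure1 /=.
under eq_integral do rewrite lebesgue_xsection_trapezoid //.
rewrite -integral_mkcond.
pose k := u0 - l0 - (us - ls) * a.
have len x : u0 + us * (x - a) - (l0 + ls * (x - a)) = (k%:P + (us - ls) *: 'X).[x].
  by rewrite !(hornerD, hornerZ, hornerX, hornerXn, hornerC) /k; ring.
under eq_integral => x _ do rewrite len.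
have mlen : measurable_fun setT (fun x => (k%:P + (us - ls) *: 'X).[x]%:E).
  by apply/measurable_EFinP; apply: continuous_measurable_fun; exact: continuous_horner.
move: ab; rewrite le_eqVlt => /orP[/eqP <-|ab].
  rewrite set_itvoo0 ?lexx // integral_set0.
  by apply/eqP; rewrite eq_sym eqe; apply/eqP; ring.
rewrite integral_itv_obnd_cbnd; last exact: measurable_funTS.
rewrite integral_itv_bndo_bndc; last exact: measurable_funTS.
pose F : {poly R} := k *: 'X + ((us - ls) / 2) *: 'X^2.
rewrite (@continuous_FTC2 _ _ (horner F)) //.
- by rewrite -EFinB !(hornerD, hornerZ, hornerX, hornerXn, hornerC) /k; congr EFin; field.
- by apply: continuous_subspaceT => x; exact: continuous_horner.
- split; first by move=> x _; exact: derivable_horner.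
    exact/cvg_at_right_filter/continuous_horner.
  exact/cvg_at_left_filter/continuous_horner.
- move=> x _; rewrite -derivE /F derivD !derivZ derivX derivXn !(hornerD, hornerZ, hornerX, hornerXn, hornerC) /=.
  by rewrite expr1; field.
Qed.

Definition cross (p q r : plane) : R :=
  (q.1 - p.1) * (r.2 - p.2) - (q.2 - p.2) * (r.1 - p.1).

Definition open_triangle (p q r : plane) : set plane :=
  [set X | exists a b c : R, [/\ 0 < a, 0 < b, 0 < c, a + b + c = 1 &
    X = (a * p.1 + b * q.1 + c * r.1, a * p.2 + b * q.2 + c * r.2)]].

Lemma open_triangleC12 p q r : open_triangle p q r = open_triangle q p r.
Proof.
by apply/seteqP; split => X [a [b [c [a0 b0 c0 abc ->]]]]; exists b, a, c;
  split => //; [lra | congr pair; ring | lra | congr pair; ring].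
Qed.

Lemma open_triangleC23 p q r : open_triangle p q r = open_triangle p r q.
Proof.
by apply/seteqP; split => X [a [b [c [a0 b0 c0 abc ->]]]]; exists a, c, b;
  split => //; [lra | congr pair; ring | lra | congr pair; ring].
Qed.

Lemma open_triangle_shrink (p q r : plane) (tau : R) : 0 < tau <= 1 ->
  open_triangle p q (p.1 + tau * (r.1 - p.1), p.2 + tau * (r.2 - p.2))
  `<=` open_triangle p q r.
Proof.
move=> /andP[tau0 tau1] X [a [b [c [a0 b0 c0 abc ->]]]].
exists (a + c * (1 - tau)), b, (c * tau); split => //=.
- have : 0 <= c * (1 - tau) by apply: mulr_ge0; lra.
  lra.
- exact: mulr_gt0.
- lra.
- by congr pair; ring.
Qed.

(* [wedge p e l u] is the open triangle with apex [p] and vertical opposite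
   side from [(e, l)] to [(e, u)]; it is empty when [u <= l] or [e = p.1]. *)
Definition wedge (p : plane) (e l u : R) : set plane :=
  [set X | 0 < (X.1 - p.1) / (e - p.1) < 1 /\
    p.2 + (X.1 - p.1) / (e - p.1) * (l - p.2) < X.2 <
    p.2 + (X.1 - p.1) / (e - p.1) * (u - p.2)].

Lemma measurable_wedge p e l u : measurable (wedge p e l u).
Proof.
pose k := (e - p.1)^-1.
have -> : wedge p e l u =
  [set X | 0 < affine k 0 (- (k * p.1)) X] `&`
  [set X | 0 < affine (- k) 0 (1 + k * p.1) X] `&`
  [set X | 0 < affine (- k * (l - p.2)) 1 (k * p.1 * (l - p.2) - p.2) X] `&`
  [set X | 0 < affine (k * (u - p.2)) (-1) (p.2 - k * p.1 * (u - p.2)) X].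
  apply/seteqP; split => X; rewrite /wedge /affine /=;
    rewrite (_ : (X.1 - p.1) / (e - p.1) = k * X.1 - k * p.1) ?(mulrBl, mulrC k) //.
    by move=> [/andP[? ?] /andP[? ?]]; do !split; lra.
  by move=> [[[? ?] ?] ?]; do !split; lra.
by do !apply: measurableI; exact: measurable_open_halfplane.
Qed.

Lemma wedge_sub_open_triangle p e l u :
  wedge p e l u `<=` open_triangle p (e, l) (e, u).
Proof.
move=> X [/andP[t0 t1] /andP[lo up]].
set t := (X.1 - p.1) / (e - p.1) in t0 t1 lo up.
have ep : e - p.1 != 0.
  by apply: contraTneq t0 => ep0; rewrite /t ep0 invr0 mulr0 ltxx.
have ul : 0 < t * (u - l) by lra.
set s := (p.2 + t * (u - p.2) - X.2) / (t * (u - l)).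
have s0 : 0 < s by apply: divr_gt0; lra.
have s1 : s < 1 by rewrite ltr_pdivrMr // mul1r; lra.
exists (1 - t), (t * s), (t * (1 - s)); split => /=.
- lra.
- exact: mulr_gt0.
- by apply: mulr_gt0; lra.
- ring.
- rewrite [LHS]surjective_pairing; congr pair.
    transitivity (p.1 + t * (e - p.1)); first by rewrite /t divfK // addrC subrK.
    ring.
  transitivity (p.2 + t * (u - p.2) - s * (t * (u - l))); last ring.
  by rewrite /s divfK ?gt_eqF //; ring.
Qed.

Lemma wedge_between p e l u X :
  wedge p e l u X -> (X.1 - p.1) * (X.1 - e) < 0.
Proof.
move=> [/andP[t0 t1] _]; have [ep|ep|ep] := ltgtP e p.1.
- have d0 : e - p.1 < 0 by lra.
  move: t0 t1; rewrite ltr_ndivlMr // ltr_ndivrMr // mul0r mul1r; nra.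
- move: t0 t1; rewrite ltr_pdivlMr ?subr_gt0 // ltr_pdivrMr ?subr_gt0 //.
  by rewrite mul0r mul1r; nra.
- by move: t0; rewrite ep subrr invr0 mulr0 ltxx.
Qed.

Lemma wedge_measure p e l u : l <= u ->
  lambda2 (wedge p e l u) = (`|e - p.1| * (u - l) / 2)%:E.
Proof.
move=> lu; have [ep|ep|ep] := ltgtP p.1 e.
- have d0 : 0 < e - p.1 by rewrite subr_gt0.
  have -> : wedge p e l u =
      trapezoid p.1 e p.2 ((l - p.2) / (e - p.1)) p.2 ((u - p.2) / (e - p.1)).
    have lineE x c : (x - p.1) / (e - p.1) * (c - p.2) = (c - p.2) / (e - p.1) * (x - p.1).
      by ring.
    apply/funext => X; rewrite /wedge /trapezoid /= !lineE.
    by rewrite ltr_pdivlMr // ltr_pdivrMr // mul0r mul1r subr_gt0 ltrBlDr subrK.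
  rewrite trapezoid_measure ?lexx //; first last.
  - by rewrite !divfK ?gt_eqF // !subrKC.
  - exact: ltW.
  by rewrite gtr0_norm //; congr EFin; field; rewrite gt_eqF.
- have d0 : 0 < p.1 - e by rewrite subr_gt0.
  have -> : wedge p e l u =
      trapezoid e p.1 l ((p.2 - l) / (p.1 - e)) u ((p.2 - u) / (p.1 - e)).
    have tE x : (x - p.1) / (e - p.1) = (p.1 - x) / (p.1 - e).
      by rewrite -[x - p.1]opprB -[e - p.1]opprB invrN mulrNN.
    have lineE x c :
        p.2 + (p.1 - x) / (p.1 - e) * (c - p.2) = c + (p.2 - c) / (p.1 - e) * (x - e).
      by field; rewrite gt_eqF.
    apply/funext => X; rewrite /wedge /trapezoid /= !tE !lineE.
    rewrite ltr_pdivlMr // ltr_pdivrMr // mul0r mul1r subr_gt0 ltrD2l ltrN2.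
    by rewrite andbC.
  rewrite trapezoid_measure //; first last.
  - by rewrite !divfK ?gt_eqF // !subrKC.
  - exact: ltW.
  by rewrite ltr0_norm ?subr_lt0 //; congr EFin; field; rewrite gt_eqF.
- have -> : wedge p e l u = set0.
    by apply/seteqP; split => X // [/andP[]]; rewrite -ep (subrr p.1) invr0 mulr0 ltxx.
  by rewrite measure0 ep (subrr e) normr0 !mul0r.
Qed.

Lemma wedge_eq0 p e l u : u <= l -> wedge p e l u = set0.
Proof.
move=> ul; apply/seteqP; split => X // [/andP[t0 _] /andP[lo up]].
have : 0 < (X.1 - p.1) / (e - p.1) * (u - l) by lra.
by rewrite pmulr_rgt0 // subr_gt0 ltNge ul.
Qed.

Lemma open_triangle_minmax p e y y' :
  open_triangle p (e, Num.min y y') (e, Num.max y y') = open_triangle p (e, y) (e, y').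
Proof.
by case: leP; rewrite // open_triangleC23.
Qed.

(* A measurable part of the open triangle carrying its whole area; it must be
   empty for a degenerate triangle, whose open triangle is a segment. *)
Definition triangle_core (p q r : plane) (S : set plane) : Prop :=
  [/\ measurable S, S `<=` open_triangle p q r, (cross p q r = 0 -> S = set0)
    & ((`|cross p q r| / 2)%:E <= lambda2 S)%E].

Lemma triangle_coreC12 p q r S : triangle_core p q r S -> triangle_core q p r S.
Proof.
have crossC : cross q p r = - cross p q r by rewrite /cross; ring.
case=> mS sS S0 areaS; split => //.
- by rewrite -open_triangleC12.
- by rewrite crossC => /eqP; rewrite oppr_eq0 => /eqP /S0.
- by rewrite crossC normrN.
Qed.

Lemma triangle_coreC23 p q r S : triangle_core p q r S -> triangle_core p r q S.
Proof.
have crossC : cross p r q = - cross p q r by rewrite /cross; ring.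
case=> mS sS S0 areaS; split => //.
- by rewrite -open_triangleC23.
- by rewrite crossC => /eqP; rewrite oppr_eq0 => /eqP /S0.
- by rewrite crossC normrN.
Qed.

Lemma triangle_core_sorted (p1 p2 p3 : plane) :
  p1.1 <= p2.1 <= p3.1 -> exists S, triangle_core p1 p2 p3 S.
Proof.
case: p1 p2 p3 => [x1 y1] [x2 y2] [x3 y3] /= /andP[le12 le23].
have [lt13|ge13] := ltP x1 x3; last first.
  have [-> ->] : x2 = x1 /\ x3 = x1 by split; lra.
  exists set0; split; [exact: measurable0 | exact: sub0set | by [] |].
  by rewrite /cross /= !subrr !(mul0r, mulr0) subrr normr0 mul0r measure0.
(* cut the triangle by the vertical line through p2, which meets the side
   p1 p3 at M = (x2, m) *)
set tau := (x2 - x1) / (x3 - x1).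
set m := y1 + tau * (y3 - y1).
have d13 : x3 - x1 != 0 by rewrite subr_eq0 gt_eqF.
have x2E : x2 = x1 + tau * (x3 - x1) by rewrite /tau divfK // addrC subrK.
have crossE : cross (x1, y1) (x2, y2) (x3, y3) = (x3 - x1) * (m - y2).
  by rewrite /cross /m /= {1}x2E; ring.
set lo := Num.min y2 m; set hi := Num.max y2 m.
have hilo : hi - lo = `|m - y2|.
  rewrite /lo /hi; case: (leP y2 m) => h.
    by rewrite ger0_norm // subr_ge0.
  by rewrite ltr0_norm ?subr_lt0 // opprB.
have le_lohi : lo <= hi by rewrite -subr_ge0 hilo.
exists (wedge (x1, y1) x2 lo hi `|` wedge (x3, y3) x2 lo hi); split.
- by apply: measurableU; exact: measurable_wedge.
- move=> X [wX|wX].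
  + have lt12 : x1 < x2.
      rewrite lt_neqAle le12 andbT; apply/eqP => e12.
      by have := wedge_between wX; rewrite /= -e12 -expr2 ltNge sqr_ge0.
    have tau01 : 0 < tau <= 1.
      by rewrite divr_gt0 ?subr_gt0 // ler_pdivrMr ?subr_gt0 // mul1r lerD2r.
    apply: (open_triangle_shrink (r := (x3, y3)) tau01) => /=.
    rewrite -x2E -/m -open_triangle_minmax.
    exact: wedge_sub_open_triangle.
  + have lt23 : x2 < x3.
      rewrite lt_neqAle le23 andbT; apply/eqP => e23.
      by have := wedge_between wX; rewrite /= e23 -expr2 ltNge sqr_ge0.
    have tau_lt1 : tau < 1 by rewrite ltr_pdivrMr ?subr_gt0 // mul1r ltrD2r.
    have tau_ge0 : 0 <= tau by rewrite /tau divr_ge0 // subr_ge0 // ltW.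
    have tau01 : 0 < 1 - tau <= 1 by apply/andP; split; lra.
    rewrite open_triangleC12 open_triangleC23 open_triangleC12.
    apply: (open_triangle_shrink (r := (x1, y1)) tau01) => /=.
    have -> : x3 + (1 - tau) * (x1 - x3) = x2 by rewrite x2E; ring.
    have -> : y3 + (1 - tau) * (y1 - y3) = m by rewrite /m; ring.
    rewrite -open_triangle_minmax.
    exact: wedge_sub_open_triangle.
- move=> /eqP; rewrite crossE mulf_eq0 (negbTE d13) /= subr_eq0 => /eqP mE.
  have hi_lo : hi <= lo by rewrite -subr_le0 hilo mE subrr normr0.
  by rewrite !wedge_eq0 // setU0.
- have disj : wedge (x1, y1) x2 lo hi `&` wedge (x3, y3) x2 lo hi = set0.
    apply/seteqP; split => X // [/wedge_between /= w1 /wedge_between /= w3].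
    by case: (ltP X.1 x2) => h; nra.
  rewrite measureU ?disj //; try exact: measurable_wedge.
  rewrite /= !wedge_measure // -EFinD lee_fin crossE normrM hilo.
  have n13 : `|x3 - x1| = x3 - x1 by rewrite ger0_norm // subr_ge0 ltW.
  have n12 : `|x2 - x1| = x2 - x1 by rewrite ger0_norm // subr_ge0.
  have n23 : `|x2 - x3| = x3 - x2 by rewrite ler0_norm ?opprB // subr_le0.
  by rewrite n13 n12 n23 [leRHS](_ : _ = (x3 - x1) * `|m - y2| / 2) //; ring.
Qed.

Lemma triangle_core_exists p q r : exists S, triangle_core p q r S.
Proof.
pose core a b c := exists S, triangle_core a b c S.
have C12 a b c : core a b c -> core b a c by case=> S /triangle_coreC12; exists S.
have C23 a b c : core a b c -> core a c b by case=> S /triangle_coreC23; exists S.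
have sorted a b c : a.1 <= b.1 -> b.1 <= c.1 -> core a b c.
  by move=> ab bc; apply: triangle_core_sorted; rewrite ab bc.
rewrite -/(core p q r).
have [pq|/ltW qp] := leP p.1 q.1; have [qr|/ltW rq] := leP q.1 r.1.
- exact: sorted.
- have [pr|/ltW rp] := leP p.1 r.1; first exact/C23/sorted.
  exact/C23/C12/sorted.
- have [pr|/ltW rp] := leP p.1 r.1; first exact/C12/sorted.
  exact/C12/C23/sorted.
- exact/C12/C23/C12/sorted.
Qed.

Lemma affine_convex (al be ga a b c : R) (p q r : plane) : a + b + c = 1 ->
  affine al be ga (a * p.1 + b * q.1 + c * r.1, a * p.2 + b * q.2 + c * r.2) =
  a * affine al be ga p + b * affine al be ga q + c * affine al be ga r.
Proof.
move=> abc; rewrite /affine /= -[ga]mul1r -{1}abc; ring.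
Qed.

Lemma cross_eq0_affine (al be ga : R) (p q r : plane) : (al != 0) || (be != 0) ->
  affine al be ga p = 0 -> affine al be ga q = 0 -> affine al be ga r = 0 ->
  cross p q r = 0.
Proof.
rewrite /affine /cross => albe fp fq fr.
case/orP: albe => [al0|be0].
- have dq : al * (q.1 - p.1) = - be * (q.2 - p.2) by lra.
  have dr : al * (r.1 - p.1) = - be * (r.2 - p.2) by lra.
  apply: (mulfI al0); rewrite mulr0.
  transitivity (al * (q.1 - p.1) * (r.2 - p.2) - (q.2 - p.2) * (al * (r.1 - p.1))).
    by ring.
  by rewrite dq dr; ring.
- have dq : be * (q.2 - p.2) = - al * (q.1 - p.1) by lra.
  have dr : be * (r.2 - p.2) = - al * (r.1 - p.1) by lra.
  apply: (mulfI be0); rewrite mulr0.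
  transitivity ((q.1 - p.1) * (be * (r.2 - p.2)) - be * (q.2 - p.2) * (r.1 - p.1)).
    by ring.
  by rewrite dq dr; ring.
Qed.

Lemma triangle_core_halfplane (al be ga : R) (p q r : plane) (S : set plane) :
  (al != 0) || (be != 0) ->
  affine al be ga p <= 0 -> affine al be ga q <= 0 -> affine al be ga r <= 0 ->
  triangle_core p q r S -> S `<=` [set X | affine al be ga X < 0].
Proof.
move=> albe fp fq fr [_ sS S0 _] X SX; rewrite /= lt_neqAle.
have [a [b [c [a0 b0 c0 abc XE]]]] := sS X SX.
have fX : affine al be ga X = a * affine al be ga p + b * affine al be ga q +
    c * affine al be ga r by rewrite XE affine_convex.
have [ap bq cr] : [/\ a * affine al be ga p <= 0, b * affine al be ga q <= 0 &
    c * affine al be ga r <= 0] by split; apply: mulr_ge0_le0 => //; exact: ltW.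
rewrite fX (_ : _ <= 0) ?andbT; last lra.
(* were X on the line, so would be its three positively weighted vertices *)
apply/negP => /eqP f0; suff : cross p q r = 0 by move/S0 => S_0; rewrite S_0 in SX.
have zero_of (k x : R) : 0 < k -> k * x = 0 -> x = 0.
  by move=> k0 /eqP; rewrite mulf_eq0 gt_eqF //= => /eqP.
by apply: (cross_eq0_affine albe);
  [apply: (zero_of a) | apply: (zero_of b) | apply: (zero_of c)] => //; lra.
Qed.

Lemma triangle_cores_disjoint (al be ga : R) (p1 p2 p3 q1 q2 q3 : plane)
    (S S' : set plane) : (al != 0) || (be != 0) ->
  affine al be ga p1 <= 0 -> affine al be ga p2 <= 0 -> affine al be ga p3 <= 0 ->
  0 <= affine al be ga q1 -> 0 <= affine al be ga q2 -> 0 <= affine al be ga q3 ->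
  triangle_core p1 p2 p3 S -> triangle_core q1 q2 q3 S' -> S `&` S' = set0.
Proof.
move=> albe fp1 fp2 fp3 fq1 fq2 fq3 cS cS'.
have affN X : affine (- al) (- be) (- ga) X = - affine al be ga X by rewrite /affine; ring.
have albeN : (- al != 0) || (- be != 0) by rewrite !oppr_eq0.
have neg := triangle_core_halfplane albe fp1 fp2 fp3 cS.
have pos : S' `<=` [set X | affine (- al) (- be) (- ga) X < 0].
  by apply: (triangle_core_halfplane albeN _ _ _ cS'); rewrite affN oppr_le0.
apply/seteqP; split => X // [/neg /= fX /pos /=]; rewrite affN oppr_lt0.
by rewrite ltNge ltW.
Qed.

Lemma open_triangle_sub_hull n (K : 'I_n -> plane) (i j k : 'I_n) :
  open_triangle (K i) (K j) (K k) `<=` convex_hull K.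
Proof.
have pick (i0 : 'I_n) (f : 'I_n -> R) : \sum_(l < n) (l == i0)%:R * f l = f i0.
  rewrite (bigD1 i0) //= eqxx mul1r big1 ?addr0 // => l /negbTE ->.
  by rewrite mul0r.
have pick1 (i0 : 'I_n) : \sum_(l < n) (l == i0)%:R = 1 :> R.
  by rewrite -[RHS](pick i0 (fun=> 1)); apply: eq_bigr => l _; rewrite mulr1.
move=> X [a [b [c [a0 b0 c0 abc ->]]]].
exists (fun l => a * (l == i)%:R + b * (l == j)%:R + c * (l == k)%:R); split; [|split].
- by move=> l; rewrite !addr_ge0 // mulr_ge0 // ltW.
- by rewrite !big_split /= -!mulr_sumr !pick1 !mulr1.
- have weighted (f : 'I_n -> R) : \sum_(l < n)
      (a * (l == i)%:R + b * (l == j)%:R + c * (l == k)%:R) * f l =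
      a * f i + b * f j + c * f k.
    rewrite (eq_bigr (fun l => a * ((l == i)%:R * f l) + b * ((l == j)%:R * f l)
      + c * ((l == k)%:R * f l))); last by move=> l _; ring.
    by rewrite !big_split /= -!mulr_sumr !pick.
  by rewrite !weighted.
Qed.

Lemma le_lebesgue_measure (A B : set R) : A `<=` B -> (lambda A <= lambda B)%E.
Proof.
move=> AB; rewrite /lebesgue_measure /lebesgue_stieltjes_measure /measure_extension.
exact: le_outer_measure.
Qed.

Lemma le_ge0_integralT (f g : R -> \bar R) :
  (forall x, 0 <= f x)%E -> (forall x, f x <= g x)%E ->
  (\int[lambda]_x f x <= \int[lambda]_x g x)%E.
Proof.
move=> f0 fg; have g0 x : (0 <= g x)%E := le_trans (f0 x) (fg x).
rewrite !ge0_integralTE //; apply: ereal_sup_le => _ [h hf <-].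
by exists h => //= x; exact: le_trans (hf x) (fg x).
Qed.

Lemma le_lambda2 (A B : set plane) : A `<=` B -> (lambda2 A <= lambda2 B)%E.
Proof.
move=> AB; apply: le_ge0_integralT => x; first exact: measure_ge0.
by apply: le_lebesgue_measure => y; rewrite /xsection /= !inE; exact: AB.
Qed.

End PlaneMeasure.

Section Rectangle.
Variable R : realType.
Local Notation plane := (pt R).
Local Notation lambda2 := ((@lebesgue_measure R) \x (@lebesgue_measure R))%E.

(* unnormalised coordinate of X along the axis from O towards U *)
Definition coord (O U X : plane) : R := (X.1 - O.1) * (U.1 - O.1) + (X.2 - O.2) * (U.2 - O.2).

Variables (A B C D West East North South : plane).
Hypothesis rectABCD : rectangle A B C D.

Local Notation s := (coord A B).
Local Notation t := (coord B C).
Let u1 := B.1 - A.1.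
Let u2 := B.2 - A.2.
Let v1 := C.1 - B.1.
Let v2 := C.2 - B.2.
Let a := u1 ^+ 2 + u2 ^+ 2.
Let b := v1 ^+ 2 + v2 ^+ 2.

Let orth : u1 * v1 + u2 * v2 = 0. Proof. by case: rectABCD => _ [_ []]. Qed.
Let DE : D = (A.1 + v1, A.2 + v2). Proof. by case: rectABCD => _ [_ []]. Qed.

Let a_gt0 : 0 < a.
Proof.
case: rectABCD => AB _; rewrite lt_neqAle; apply/andP; split; last by rewrite /a; nra.
apply/eqP => a0; have e1 : u1 = 0 by rewrite /a in a0; nra.
have e2 : u2 = 0 by rewrite /a in a0; nra.
apply: AB; move: e1 e2; rewrite /u1 /u2; case: A B => [x y] [x' y'] /= e1 e2.
by congr pair; lra.
Qed.

Let b_gt0 : 0 < b.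
Proof.
case: rectABCD => _ [BC _]; rewrite lt_neqAle; apply/andP; split; last by rewrite /b; nra.
apply/eqP => b0; have e1 : v1 = 0 by rewrite /b in b0; nra.
have e2 : v2 = 0 by rewrite /b in b0; nra.
apply: BC; move: e1 e2; rewrite /v1 /v2; case: B C => [x y] [x' y'] /= e1 e2.
by congr pair; lra.
Qed.

Let sA : s A = 0. Proof. by rewrite /coord !subrr !mul0r addr0. Qed.
Let sB : s B = a. Proof. by rewrite /coord /a -/u1 -/u2 !expr2. Qed.
Let sC : s C = a. Proof. by rewrite -[RHS]addr0 -orth /coord /a /u1 /u2 /v1 /v2; ring. Qed.
Let sD : s D = 0. Proof. by rewrite DE /coord /= -orth /u1 /u2 /v1 /v2; ring. Qed.
Let tA : t A = 0. Proof. by rewrite /coord -[RHS]oppr0 -orth /u1 /u2 /v1 /v2; ring. Qed.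
Let tB : t B = 0. Proof. by rewrite /coord !subrr !mul0r addr0. Qed.
Let tC : t C = b. Proof. by rewrite /coord /b -/v1 -/v2 !expr2. Qed.
Let tD : t D = b.
Proof. by rewrite DE /coord /= -[RHS]subr0 -orth /b /u1 /u2 /v1 /v2; ring. Qed.

Let affine_st (al be ga : R) (X : plane) : al * s X + be * t X + ga =
  affine (al * u1 + be * v1) (al * u2 + be * v2)
    (ga - al * (A.1 * u1 + A.2 * u2) - be * (B.1 * v1 + B.2 * v2)) X.
Proof. by rewrite /affine /coord -/u1 -/u2 -/v1 -/v2; ring. Qed.

Let nonconstant_st (al be : R) : (al != 0) || (be != 0) ->
  (al * u1 + be * v1 != 0) || (al * u2 + be * v2 != 0).
Proof.
apply: contraTT; rewrite !negb_or !negbK => /andP[/eqP e1 /eqP e2].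
have /eqP : al * a = 0.
  transitivity (u1 * (al * u1 + be * v1) + u2 * (al * u2 + be * v2) - be * (u1 * v1 + u2 * v2)).
    by rewrite /a; ring.
  by rewrite e1 e2 orth; ring.
have /eqP : be * b = 0.
  transitivity (v1 * (al * u1 + be * v1) + v2 * (al * u2 + be * v2) - al * (u1 * v1 + u2 * v2)).
    by rewrite /b; ring.
  by rewrite e1 e2 orth; ring.
by rewrite !mulf_eq0 (gt_eqF a_gt0) (gt_eqF b_gt0) !orbF => -> ->.
Qed.

Let cores_separated (al be ga : R) (p1 p2 p3 q1 q2 q3 : plane) (S S' : set plane) :
  triangle_core p1 p2 p3 S -> triangle_core q1 q2 q3 S' -> (al != 0) || (be != 0) ->
  al * s p1 + be * t p1 + ga <= 0 -> al * s p2 + be * t p2 + ga <= 0 ->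
  al * s p3 + be * t p3 + ga <= 0 ->
  0 <= al * s q1 + be * t q1 + ga -> 0 <= al * s q2 + be * t q2 + ga ->
  0 <= al * s q3 + be * t q3 + ga -> S `&` S' = set0.
Proof.
move=> cS cS' /nonconstant_st albe; rewrite !affine_st => p1S p2S p3S q1S q2S q3S.
exact: (triangle_cores_disjoint albe p1S p2S p3S q1S q2S q3S cS cS').
Qed.
Arguments cores_separated al be ga {p1 p2 p3 q1 q2 q3 S S'}.

Local Notation pts := [:: A; B; C; D; West; East; North; South].
Hypothesis West_min : {in pts, forall X, s West <= s X}.
Hypothesis East_max : {in pts, forall X, s X <= s East}.
Hypothesis South_min : {in pts, forall X, t South <= t X}.
Hypothesis North_max : {in pts, forall X, t X <= t North}.

Let sW : s West <= 0. Proof. by rewrite -sA West_min // inE eqxx. Qed.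
Let sWN : s West <= s North. Proof. by rewrite West_min // !inE eqxx !orbT. Qed.
Let sWS : s West <= s South. Proof. by rewrite West_min // !inE eqxx !orbT. Qed.
Let sE : a <= s East. Proof. by rewrite -sB East_max // !inE eqxx !orbT. Qed.
Let sNE : s North <= s East. Proof. by rewrite East_max // !inE eqxx !orbT. Qed.
Let sSE : s South <= s East. Proof. by rewrite East_max // !inE eqxx !orbT. Qed.
Let tS : t South <= 0. Proof. by rewrite -tA South_min // inE eqxx. Qed.
Let tSW : t South <= t West. Proof. by rewrite South_min // !inE eqxx !orbT. Qed.
Let tSE : t South <= t East. Proof. by rewrite South_min // !inE eqxx !orbT. Qed.
Let tN : b <= t North. Proof. by rewrite -tC North_max // !inE eqxx !orbT. Qed.
Let tWN : t West <= t North. Proof. by rewrite North_max // !inE eqxx !orbT. Qed.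
Let tEN : t East <= t North. Proof. by rewrite North_max // !inE eqxx !orbT. Qed.

Let coordE := (sA, sB, sC, sD, tA, tB, tC, tD).

Section Cores.
Variables (Sabc Sacd Sw Se Sn Ss : set plane).
Hypothesis core_abc : triangle_core A B C Sabc.
Hypothesis core_acd : triangle_core A C D Sacd.
Hypothesis core_w : triangle_core West A D Sw.
Hypothesis core_e : triangle_core East B C Se.
Hypothesis core_n : triangle_core North D C Sn.
Hypothesis core_s : triangle_core South A B Ss.

Lemma central_cores_disjoint : Sabc `&` Sacd = set0.
Proof.
move: a_gt0 b_gt0 => a0 b0.
have nz : (- b != 0) || (a != 0) by rewrite oppr_eq0 gt_eqF.
by apply: (cores_separated _ _ 0 core_abc core_acd nz); rewrite ?coordE; nra.
Qed.

Lemma box_caps_disjoint (p q r : plane) (S : set plane) :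
  (0 <= s p <= a) && (0 <= t p <= b) -> (0 <= s q <= a) && (0 <= t q <= b) ->
  (0 <= s r <= a) && (0 <= t r <= b) -> triangle_core p q r S ->
  [/\ S `&` Sw = set0, S `&` Se = set0, S `&` Sn = set0 & S `&` Ss = set0].
Proof.
move: sW sE tN tS => sW0 sE0 tN0 tS0.
move=> /andP[/andP[sp0 sp1] /andP[tp0 tp1]] /andP[/andP[sq0 sq1] /andP[tq0 tq1]].
move=> /andP[/andP[sr0 sr1] /andP[tr0 tr1]] cS.
split.
- by apply: (cores_separated (-1) 0 0 cS core_w);
    rewrite ?oppr_eq0 ?oner_eq0 ?coordE //; lra.
- by apply: (cores_separated 1 0 (- a) cS core_e);
    rewrite ?oner_eq0 ?coordE //; lra.
- by apply: (cores_separated 0 1 (- b) cS core_n);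
    rewrite ?oner_eq0 ?orbT ?coordE //; lra.
- by apply: (cores_separated 0 (-1) 0 cS core_s);
    rewrite ?oppr_eq0 ?oner_eq0 ?orbT ?coordE //; lra.
Qed.

Lemma opposite_caps_disjoint : Sw `&` Se = set0 /\ Sn `&` Ss = set0.
Proof.
move: a_gt0 b_gt0 sW sE tN tS => a0 b0 sW0 sE0 tN0 tS0; split.
- by apply: (cores_separated 1 0 0 core_w core_e);
    rewrite ?oner_eq0 ?coordE //; lra.
- by apply: (cores_separated 0 (-1) 0 core_n core_s);
    rewrite ?oppr_eq0 ?oner_eq0 ?orbT ?coordE //; lra.
Qed.

(* Two caps meeting at a corner are separated by the side line through that
   corner, or else by the line joining the corner to the apex that sticks out. *)
Lemma adjacent_caps_disjoint :
  [/\ Sw `&` Sn = set0, Sw `&` Ss = set0, Se `&` Sn = set0 & Se `&` Ss = set0].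
Proof.
move: a_gt0 b_gt0 sW sE tN tS sWN sWS sNE sSE tSW tSE tWN tEN.
move=> a0 b0 sW0 sE0 tN0 tS0 sWN0 sWS0 sNE0 sSE0 tSW0 tSE0 tWN0 tEN0; split.
- have [tW|tW] := leP (t West) b.
    by apply: (cores_separated 0 1 (- b) core_w core_n);
      rewrite ?oner_eq0 ?orbT ?coordE //; lra.
  have nz : (t West - b != 0) || (- s West != 0) by rewrite subr_eq0 gt_eqF.
  by apply: (cores_separated _ _ (s West * b) core_w core_n nz); rewrite ?coordE; nra.
- have [tW|tW] := leP 0 (t West).
    by apply: (cores_separated 0 (-1) 0 core_w core_s);
      rewrite ?oppr_eq0 ?oner_eq0 ?orbT ?coordE //; lra.
  have nz : (- t West != 0) || (s West != 0) by rewrite oppr_eq0 lt_eqF.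
  by apply: (cores_separated _ _ 0 core_w core_s nz); rewrite ?coordE; nra.
- have [tE|tE] := leP (t East) b.
    by apply: (cores_separated 0 1 (- b) core_e core_n);
      rewrite ?oner_eq0 ?orbT ?coordE //; lra.
  have nz : (b - t East != 0) || (s East - a != 0) by rewrite subr_eq0 lt_eqF.
  by apply: (cores_separated _ _ (- (s East - a) * t East - (b - t East) * s East)
    core_e core_n nz); rewrite ?coordE; nra.
- have [tE|tE] := leP 0 (t East).
    by apply: (cores_separated 0 (-1) 0 core_e core_s);
      rewrite ?oppr_eq0 ?oner_eq0 ?orbT ?coordE //; lra.
  have nz : (t East != 0) || (a - s East != 0) by rewrite lt_eqF.
  by apply: (cores_separated _ _ (- (a - s East) * t East - t East * s East)
    core_e core_s nz); rewrite ?coordE; nra.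
Qed.

Lemma cores_area :
  ((`|cross A B C| / 2 + `|cross A C D| / 2 + `|cross West A D| / 2 +
    `|cross East B C| / 2 + `|cross North D C| / 2 + `|cross South A B| / 2)%:E <=
   lambda2 (Sabc `|` Sacd `|` Sw `|` Se `|` Sn `|` Ss))%E.
Proof.
move: a_gt0 b_gt0 => a0 b0.
have [bA bB bC bD] : [/\ (0 <= s A <= a) && (0 <= t A <= b),
    (0 <= s B <= a) && (0 <= t B <= b), (0 <= s C <= a) && (0 <= t C <= b) &
    (0 <= s D <= a) && (0 <= t D <= b)].
  by rewrite !coordE !lexx (ltW a0) (ltW b0).
have [w_abc e_abc n_abc s_abc] := box_caps_disjoint bA bB bC core_abc.
have [w_acd e_acd n_acd s_acd] := box_caps_disjoint bA bC bD core_acd.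
have abc_acd := central_cores_disjoint.
have [w_e n_s] := opposite_caps_disjoint.
have [w_n w_s e_n e_s] := adjacent_caps_disjoint.
move: core_abc core_acd core_w core_e core_n core_s.
move=> [m_abc _ _ l_abc] [m_acd _ _ l_acd] [m_w _ _ l_w] [m_e _ _ l_e] [m_n _ _ l_n] [m_s _ _ l_s].
rewrite measureU //; last by rewrite !setIUl w_s e_s n_s s_abc s_acd !setU0.
rewrite measureU //; last by rewrite !setIUl w_n e_n n_abc n_acd !setU0.
rewrite measureU //; last by rewrite !setIUl w_e e_abc e_acd !setU0.
rewrite measureU //; last by rewrite !setIUl w_abc w_acd !setU0.
rewrite measureU // !EFinD; do 5 apply: leeD => //.
all: by do ? apply: measurableU.
Qed.

End Cores.

Let crossACD : cross A C D = cross A B C.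
Proof. by rewrite DE /cross /v1 /v2 /=; ring. Qed.

Lemma rectangle_caps_area (H : set plane) :
  (forall p q r : plane, p \in pts -> q \in pts -> r \in pts ->
    open_triangle p q r `<=` H) ->
  ((`|cross A B C| + (`|cross West A D| + `|cross East B C| +
     `|cross North D C| + `|cross South A B|) / 2)%:E <= lambda2 H)%E.
Proof.
move=> hull.
have [Sabc core_abc] := triangle_core_exists A B C.
have [Sacd core_acd] := triangle_core_exists A C D.
have [Sw core_w] := triangle_core_exists West A D.
have [Se core_e] := triangle_core_exists East B C.
have [Sn core_n] := triangle_core_exists North D C.
have [Ss core_s] := triangle_core_exists South A B.
apply: le_trans (le_trans (cores_area core_abc core_acd core_w core_e core_n core_s) _).
  by rewrite lee_fin crossACD le_eqVlt; apply/orP; left; apply/eqP; field.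
apply: le_lambda2.
have inside p q r S : p \in pts -> q \in pts -> r \in pts ->
    triangle_core p q r S -> S `<=` H.
  by move=> pP qP rP [_ sS _ _]; apply: subset_trans sS (hull _ _ _ pP qP rP).
rewrite !subUset; do !split;
  [ apply: inside core_abc | apply: inside core_acd | apply: inside core_w
  | apply: inside core_e | apply: inside core_n | apply: inside core_s ];
  by rewrite !inE eqxx ?orbT.
Qed.

Let dist_AB : dist A B = Num.sqrt a.
Proof. by rewrite /dist /a /u1 /u2; congr Num.sqrt; ring. Qed.
Let dist_BC : dist B C = Num.sqrt b.
Proof. by rewrite /dist /b /v1 /v2; congr Num.sqrt; ring. Qed.

(* the extent of PQ across BC, resp. AB, is proportional to its extent along AB, resp. BC *)
Let across_BC (P Q : plane) :
  `|v1 * (Q.2 - P.2) - v2 * (Q.1 - P.1)| * a = `|cross A B C| * `|s Q - s P|.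
Proof.
have : (v1 * (Q.2 - P.2) - v2 * (Q.1 - P.1)) * a = - cross A B C * (s Q - s P).
  apply/eqP; rewrite -subr_eq0; apply/eqP.
  transitivity ((u1 * v1 + u2 * v2) * (u1 * (Q.2 - P.2) - u2 * (Q.1 - P.1))).
    by rewrite /cross /coord /a /u1 /u2 /v1 /v2; ring.
  by rewrite orth mul0r.
by move=> /(congr1 Num.norm); rewrite !normrM (gtr0_norm a_gt0) normrN.
Qed.

Let across_AB (P Q : plane) :
  `|u1 * (Q.2 - P.2) - u2 * (Q.1 - P.1)| * b = `|cross A B C| * `|t Q - t P|.
Proof.
have : (u1 * (Q.2 - P.2) - u2 * (Q.1 - P.1)) * b = cross A B C * (t Q - t P).
  apply/eqP; rewrite -subr_eq0; apply/eqP.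
  transitivity ((u1 * v1 + u2 * v2) * (v1 * (Q.2 - P.2) - v2 * (Q.1 - P.1))).
    by rewrite /cross /coord /b /u1 /u2 /v1 /v2; ring.
  by rewrite orth mul0r.
by move=> /(congr1 Num.norm); rewrite !normrM (gtr0_norm b_gt0).
Qed.

Lemma height_BC_le (X Y : plane) :
  s West <= s X <= s East -> s West <= s Y <= s East ->
  height B C X Y * dist B C <= `|cross A B C| + `|cross West A D| + `|cross East B C|.
Proof.
move=> /andP[WX XE] /andP[WY YE].
have cW : cross West A D = v1 * (West.2 - A.2) - v2 * (West.1 - A.1).
  by rewrite DE /cross /=; ring.
have cE : cross East B C = v1 * (East.2 - B.2) - v2 * (East.1 - B.1).
  by rewrite /cross /v1 /v2; ring.
rewrite /height divfK ?dist_BC ?gt_eqF ?sqrtr_gt0 // -/v1 -/v2.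
rewrite -(ler_pM2r a_gt0) (across_BC X Y) !(mulrDl _ _ a) cW cE.
rewrite (across_BC A West) (across_BC B East) sA sB -!mulrDr.
rewrite ler_wpM2l // subr0 (ler0_norm sW) (ger0_norm (_ : 0 <= s East - a)) ?subr_ge0 //.
by rewrite ler_norml; apply/andP; split; lra.
Qed.

Lemma height_AB_le (X Y : plane) :
  t South <= t X <= t North -> t South <= t Y <= t North ->
  height A B X Y * dist A B <= `|cross A B C| + `|cross North D C| + `|cross South A B|.
Proof.
move=> /andP[SX XN] /andP[SY YN].
have cN : cross North D C = u1 * (North.2 - D.2) - u2 * (North.1 - D.1).
  by rewrite DE /cross /u1 /u2 /v1 /v2 /=; ring.
have cS : cross South A B = u1 * (South.2 - A.2) - u2 * (South.1 - A.1).
  by rewrite /cross /u1 /u2; ring.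
rewrite /height divfK ?dist_AB ?gt_eqF ?sqrtr_gt0 // -/u1 -/u2.
rewrite -(ler_pM2r b_gt0) (across_AB X Y) !(mulrDl _ _ b) cN cS.
rewrite (across_AB D North) (across_AB A South) tD tA -!mulrDr.
rewrite ler_wpM2l // subr0 (ler0_norm tS) (ger0_norm (_ : 0 <= t North - b)) ?subr_ge0 //.
by rewrite ler_norml; apply/andP; split; lra.
Qed.

End Rectangle.

Unset Implicit Arguments.
Local Close Scope classical_set_scope.

Theorem mainTheorem4 (R : realType) (A B C D E F P Q : pt R) :
  rectangle A B C D ->
  height B C E F > dist A B ->
  height A B P Q > dist B C ->
  ((2^-1 * (height B C E F - dist A B) * dist B C
    + 2^-1 * (height A B P Q - dist B C) * dist A B
    + dist A B * dist B C)%:E <= mu (pts8 A B C D E F P Q))%E.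
Proof.
move=> rect _ _; set K := pts8 A B C D E F P Q.
pose s := coord A B; pose t := coord B C.
have [iW _ W_min] := arg_minP (fun i => s (K i)) (isT : xpredT ord0).
have [iE _ E_max] := arg_maxP (fun i => s (K i)) (isT : xpredT ord0).
have [iS _ S_min] := arg_minP (fun i => t (K i)) (isT : xpredT ord0).
have [iN _ N_max] := arg_maxP (fun i => t (K i)) (isT : xpredT ord0).
have inK X : X \in [:: A; B; C; D; K iW; K iE; K iN; K iS] -> exists i, X = K i.
  by move=> /(mapP (s := [:: ord0; 1; 2; 3; iW; iE; iN; iS]) (f := K)) [i _ ->]; exists i.
set pts := [:: A; B; C; D; K iW; K iE; K iN; K iS] in inK.
have Wm : {in pts, forall X, s (K iW) <= s X} by move=> X /inK [j ->]; exact: W_min.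
have Em : {in pts, forall X, s X <= s (K iE)} by move=> X /inK [j ->]; exact: E_max.
have Sm : {in pts, forall X, t (K iS) <= t X} by move=> X /inK [j ->]; exact: S_min.
have Nm : {in pts, forall X, t X <= t (K iN)} by move=> X /inK [j ->]; exact: N_max.
have hull (p q r : pt R) : p \in pts -> q \in pts -> r \in pts ->
    (open_triangle p q r `<=` convex_hull K)%classic.
  by move=> /inK [i ->] /inK [j ->] /inK [k ->]; exact: open_triangle_sub_hull.
have between (f : pt R -> R) (lo hi : 'I_8) (k : nat) (k8 : (k < 8)%N) :
    (forall j, xpredT j -> f (K lo) <= f (K j)) ->
    (forall j, xpredT j -> f (K j) <= f (K hi)) ->
    f (K lo) <= f (K (Ordinal k8)) <= f (K hi).
  by move=> lo_min hi_max; rewrite lo_min ?hi_max.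
have hEF : height B C E F * dist B C <= _ := height_BC_le rect Wm Em
  (between s _ _ 4 isT W_min E_max) (between s _ _ 5 isT W_min E_max).
have hPQ : height A B P Q * dist A B <= _ := height_AB_le rect Sm Nm
  (between t _ _ 6 isT S_min N_max) (between t _ _ 7 isT S_min N_max).
apply: le_trans (rectangle_caps_area rect Wm Em Sm Nm hull).
rewrite lee_fin; lra.
Qed.
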